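(* Let $n$ be a positive integer, $F$ a finite set of cardinality $n$ and $\sigma : F \to F$ a map. (i) For every $a \in F$ there exist nonnegative integers $k, l$ with $l \ge 1$, $\sigma^k(a) = \sigma^{k+l}(a)$ and $k + l \le n$. (ii) For every $a \in F$, if $\sigma^{k_i}(a) = \sigma^{k_i + l_i}(a)$ for $i = 1,2$ (with $k_i \ge 0$, $l_i \ge 1$), then $\sigma^k(a) = \sigma^{k+l}(a)$ for $(k,l) = (\min\{k_1,k_2\}, \gcd\{l_1,l_2\})$. (iii) For every $a \in F$ there is a unique pair $(k_a, l_a)$ of a nonnegative integer $k_a$ and a positive integer $l_a$ such that for all integers $k' \ge 0$, $l' \ge 1$: $\sigma^{k'}(a) = \sigma^{k'+l'}(a)$ if and only if $k_a \le k'$ and $l_a \mid l'$. (iv) Let $K = \max_{a \in F} k_a$ and $L = \operatorname{lcm}_{a \in F} l_a$. Then for all integers $K' \ge 0$, $L' \ge 1$: $\sigma^{K'} = \sigma^{K'+L'}$ if and only if $K \le K'$ and $L \mid L'$. (v) $K + \alpha(L) \le n$.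
   Context: $\sigma^k$ denotes the $k$-th iterate of $\sigma$ ($\sigma^0 = \mathrm{id}$). The function $\alpha : \mathbb{N} \to \mathbb{N}$ is defined by $\alpha(m) = \max\{p^e : p \text{ prime}, e \ge 0, p^e \mid m\}$, the largest prime-power divisor of $m$ (with $\alpha(1) = 1$). *)

From mathcomp Require Import all_boot.
Set Implicit Arguments. Unset Strict Implicit. Unset Printing Implicit Defensive.

(* d is a prime power p^e with p prime and e >= 0 (so 1 is a prime power).
   The bounds p <= d+1, e <= d are harmless: p^e = d >= 1 forces them. *)
Definition prime_powerb (d : nat) : bool :=
  [exists p : 'I_d.+2, exists e : 'I_d.+1, prime p && (p ^ e == d)].

Definition alpha (m : nat) : nat :=
  \max_(d < m.+1 | (d %| m) && prime_powerb d) d.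

From mathcomp Require Import all_boot.
Set Implicit Arguments. Unset Strict Implicit. Unset Printing Implicit Defensive.

(* The equation sigma^k(a) = sigma^(k+l)(a) says that l is a period of the
   point sigma^k(a).  The periods of a point are closed under multiples and,
   by Bezout, under gcd; and if sigma^k(a) is periodic then it lies on the
   cycle of sigma^j(a) for every j >= k, so it inherits the periods of
   sigma^j(a).  This gives (ii), and (iii) follows by taking k_a minimal and
   then l_a minimal.  For (v), the points sigma^i(a), i < k_a, are pairwise
   distinct and not periodic, whereas the cycle of any b consists of l_b
   distinct periodic points; hence k_a + l_b <= n.  Finally every prime power
   dividing L = lcm_b l_b divides some l_b, so alpha(L) <= max_b l_b. *)

Section Iterates.

Variables (T : Type) (f : T -> T).

Lemma eventually_periodicP k l a :
  iter k f a = iter (k + l) f a <-> iter l f (iter k f a) = iter k f a.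
Proof. by rewrite addnC iterD; split=> /esym. Qed.

Lemma iter_period_mul l c y : iter l f y = y -> iter (c * l) f y = y.
Proof. by move=> yl; rewrite iterM; apply: iter_fix. Qed.

Lemma iter_period_dvdn l m y : l %| m -> iter l f y = y -> iter m f y = y.
Proof. by move=> /dvdnP[c ->]; apply: iter_period_mul. Qed.

Lemma iter_period_gcdn l1 l2 y : 0 < l1 ->
  iter l1 f y = y -> iter l2 f y = y -> iter (gcdn l1 l2) f y = y.
Proof.
move=> l1_gt0 yl1 yl2; have [c _ /dvdnP[d def_d]] := Bezoutl l2 l1_gt0.
by rewrite -{1}(iter_period_mul c yl2) -iterD def_d iter_period_mul.
Qed.

Lemma eventually_periodic_le k j l a : k <= j ->
  iter k f a = iter (k + l) f a -> iter j f a = iter (j + l) f a.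
Proof. by move=> /subnK<- E; rewrite -addnA iterD [in RHS]iterD -E. Qed.

Lemma eventually_periodic_dvdn k l m a : l %| m ->
  iter k f a = iter (k + l) f a -> iter k f a = iter (k + m) f a.
Proof.
move=> l_m /eventually_periodicP kl.
exact/eventually_periodicP/(iter_period_dvdn l_m).
Qed.

(* A periodic z is reached again from iter d f z after d * l - d steps. *)
Lemma periodic_iter_period d g l z : 0 < l -> iter l f z = z ->
  iter g f (iter d f z) = iter d f z -> iter g f z = z.
Proof.
move=> l_gt0 zl zg.
have back : iter (d * l - d) f (iter d f z) = z.
  by rewrite -iterD subnK ?leq_pmulr // iter_period_mul.
by rewrite -back -iterD addnC iterD zg.
Qed.

Lemma eventually_periodic_minn_gcdn a k1 l1 k2 l2 : 0 < l1 -> 0 < l2 ->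
  iter k1 f a = iter (k1 + l1) f a -> iter k2 f a = iter (k2 + l2) f a ->
  iter (minn k1 k2) f a = iter (minn k1 k2 + gcdn l1 l2) f a.
Proof.
wlog le_k12 : k1 l1 k2 l2 / k1 <= k2.
  move=> W l1_gt0 l2_gt0 E1 E2; case/orP: (leq_total k1 k2) => le.
    exact: W.
  by rewrite minnC gcdnC; apply: W.
move=> l1_gt0 _ E1 E2; rewrite (minn_idPl le_k12); apply/eventually_periodicP.
have y_l1 : iter l1 f (iter k2 f a) = iter k2 f a.
  by apply/eventually_periodicP; apply: eventually_periodic_le E1.
have y_l2 : iter l2 f (iter k2 f a) = iter k2 f a by apply/eventually_periodicP.
apply: (periodic_iter_period (d := k2 - k1) l1_gt0).
  exact/eventually_periodicP.
rewrite -[iter (k2 - k1) _ _]iterD subnK //.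
exact: iter_period_gcdn.
Qed.

Definition preperiod_period a k l :=
  0 < l /\ forall k' l', 0 < l' ->
    iter k' f a = iter (k' + l') f a <-> k <= k' /\ l %| l'.

Lemma preperiod_period_uniq a k1 l1 k2 l2 :
  preperiod_period a k1 l1 -> preperiod_period a k2 l2 -> k1 = k2 /\ l1 = l2.
Proof.
move=> [l1_gt0 P1] [l2_gt0 P2].
have [le21 dvd21] : k2 <= k1 /\ l2 %| l1.
  by apply/(P2 _ _ l1_gt0)/(P1 _ _ l1_gt0).
have [le12 dvd12] : k1 <= k2 /\ l1 %| l2.
  by apply/(P1 _ _ l2_gt0)/(P2 _ _ l2_gt0).
by split; apply/eqP; [rewrite eqn_leq le12 | rewrite eqn_dvd dvd12].
Qed.

Lemma preperiod_period_iter a k l i m : preperiod_period a k l -> 0 < m ->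
  iter m f (iter i f a) = iter i f a -> k <= i /\ l %| m.
Proof. by move=> [_ P] m_gt0 /eventually_periodicP/(P _ _ m_gt0). Qed.

End Iterates.

Lemma preperiod_period_exists (T : eqType) (f : T -> T) a k0 l0 : 0 < l0 ->
  iter k0 f a = iter (k0 + l0) f a -> exists k l, preperiod_period f a k l.
Proof.
move=> l0_gt0 E0.
have ex_k : exists k, iter k f a == iter (k + l0) f a by exists k0; apply/eqP.
have [k /eqP Ek min_k] := ex_minnP ex_k.
have ex_l : exists l, (0 < l) && (iter k f a == iter (k + l) f a).
  by exists l0; rewrite l0_gt0 Ek eqxx.
have [l /andP[l_gt0 /eqP El] min_l] := ex_minnP ex_l.
exists k, l; split=> // k' l' l'_gt0; split=> [E' | [le_kk' l_l']]; last first.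
  by apply: eventually_periodic_dvdn l_l' _; apply: eventually_periodic_le El.
have le_kk' : k <= k'.
  apply: leq_trans (geq_minr k0 k'); apply: min_k; apply/eqP.
  apply: eventually_periodic_dvdn (dvdn_gcdl l0 l') _.
  exact: eventually_periodic_minn_gcdn.
split=> //.
have := eventually_periodic_minn_gcdn l_gt0 l'_gt0 El E'.
rewrite (minn_idPl le_kk') => Eg.
have le_l_g : l <= gcdn l l' by apply: min_l; rewrite gcdn_gt0 l_gt0 -Eg eqxx.
suff <- : gcdn l l' = l by apply: dvdn_gcdr.
by apply/eqP; rewrite eqn_leq le_l_g dvdn_leq ?dvdn_gcdl.
Qed.

Lemma uniq_traject (T : eqType) (f : T -> T) x n :
  (forall i j, i < j < n -> iter i f x != iter j f x) -> uniq (traject f x n).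
Proof.
elim: n => // n IHn neq; rewrite trajectSr rcons_uniq IHn ?andbT; last first.
  by move=> i j /andP[lt_ij /ltnW lt_jn]; apply: neq; rewrite lt_ij.
apply/trajectP => -[i lt_in /eqP]; rewrite eq_sym; apply/negP/neq.
by rewrite lt_in /=.
Qed.

Lemma prime_power_dvdn_biglcm (I : finType) (g : I -> nat) p e :
  prime p -> 0 < e -> p ^ e %| \big[lcmn/1]_(i : I) g i ->
  exists i, p ^ e %| g i.
Proof.
move=> p_pr e_gt0; elim/big_rec: _ => [|i L _ IHL].
  by rewrite dvdn1 -(expn0 p) eqn_exp2l ?prime_gt1 // eqn0Ngt e_gt0.
have [L0 _ | L_gt0] := posnP L; first by apply: IHL; rewrite L0 dvdn0.
have [gi0 _ | gi_gt0] := posnP (g i); first by exists i; rewrite gi0 dvdn0.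
rewrite pfactor_dvdn ?lcmn_gt0 ?gi_gt0 // logn_lcm // leq_max.
case/orP => [le_e | le_e]; first by exists i; rewrite pfactor_dvdn.
by apply: IHL; rewrite pfactor_dvdn.
Qed.

Lemma alpha_biglcm_leq_bigmax (I : finType) (g : I -> nat) (i0 : I) :
  (forall i, 0 < g i) -> alpha (\big[lcmn/1]_(i : I) g i) <= \max_(i : I) g i.
Proof.
move=> g_gt0; have le_max i : g i <= \max_(j : I) g j := leq_bigmax i.
apply/bigmax_leqP => d /andP[d_L /existsP[p /existsP[e]]].
case/andP => p_pr /eqP pe; rewrite -pe in d_L *; have [-> | e_gt0] := posnP e.
  by rewrite expn0 (leq_trans (g_gt0 i0) (le_max i0)).
have [i pe_gi] := prime_power_dvdn_biglcm p_pr e_gt0 d_L.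
by apply: leq_trans (le_max i); apply: dvdn_leq.
Qed.

Section FiniteIterates.

Variables (F : finType) (f : F -> F).

Lemma eventually_periodic_within_card a :
  exists k l, [/\ 0 < l, iter k f a = iter (k + l) f a & k + l <= #|F|].
Proof.
have := looping_order f a; rewrite /looping => /trajectP[k lt_k E].
exists k, (order f a - k); rewrite subn_gt0 subnKC; last exact: ltnW.
by split; [exact: lt_k | exact: esym E | exact: max_card].
Qed.

Lemma preperiod_add_period_leq_card a b ka la kb lb :
  preperiod_period f a ka la -> preperiod_period f b kb lb -> ka + lb <= #|F|.
Proof.
move=> Pa Pb; set y := iter kb f b.
have y_lb : iter lb f y = y.
  by apply/eventually_periodicP; apply/(Pb.2 _ _ Pb.1); split.
have tail_uniq : uniq (traject f a ka).
  apply: uniq_traject => i j /andP[lt_ij lt_jk]; apply/eqP => Eij.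
  have [le_ki _] : ka <= i /\ la %| j - i.
    apply: preperiod_period_iter Pa _ _; first by rewrite subn_gt0.
    by rewrite -iterD (subnK (ltnW lt_ij)) Eij.
  by have := ltn_trans lt_ij lt_jk; rewrite ltnNge le_ki.
have cycle_uniq : uniq (traject f y lb).
  apply: uniq_traject => i j /andP[lt_ij lt_jl]; apply/eqP => Eij.
  have [_ lb_ji] : kb <= i + kb /\ lb %| j - i.
    apply: preperiod_period_iter Pb _ _; first by rewrite subn_gt0.
    by rewrite iterD -/y -iterD (subnK (ltnW lt_ij)) Eij.
  have := leq_ltn_trans (leq_subr i j) lt_jl.
  by rewrite ltnNge dvdn_leq // subn_gt0.
have tail_cycle_disjoint : ~~ has (mem (traject f a ka)) (traject f y lb).
  apply/hasPn => _ /trajectP[j _ ->]; apply/negP => /trajectP[i lt_ik Eji].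
  have [le_ki _] : ka <= i /\ la %| lb.
    apply: preperiod_period_iter Pa Pb.1 _.
    by rewrite -Eji -iterD addnC iterD y_lb.
  by rewrite ltnNge le_ki in lt_ik.
have uniq_s : uniq (traject f a ka ++ traject f y lb).
  by rewrite cat_uniq tail_uniq tail_cycle_disjoint cycle_uniq.
rewrite -[ka](size_traject f a) -[lb](size_traject f y) -size_cat.
by rewrite -(card_uniqP uniq_s) max_card.
Qed.

Lemma iter_eventually_periodic_max_lcm (ka la : F -> nat) :
  (forall a, preperiod_period f a (ka a) (la a)) -> forall K' L', 0 < L' ->
  (forall x, iter K' f x = iter (K' + L') f x) <->
    \max_a ka a <= K' /\ \big[lcmn/1]_a la a %| L'.
Proof.
move=> P K' L' L'_gt0; have P' a := (P a).2 K' L' L'_gt0.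
split=> [E | [le_K dvd_L] x].
  by split; [apply/bigmax_leqP | apply/dvdn_biglcmP] => a _;
    have [] := (P' a).1 (E a).
apply/P'; split; first exact: leq_trans (leq_bigmax x) le_K.
exact: dvdn_trans (biglcmn_sup x _ _) dvd_L.
Qed.

Lemma bigmax_add_alpha_biglcm_leq_card (ka la : F -> nat) :
  (forall a, preperiod_period f a (ka a) (la a)) -> 0 < #|F| ->
  \max_a ka a + alpha (\big[lcmn/1]_a la a) <= #|F|.
Proof.
move=> P F_gt0; have [a0 ->] := eq_bigmax ka F_gt0.
have [b max_la] := eq_bigmax la F_gt0.
apply: leq_trans (preperiod_add_period_leq_card (P a0) (P b)).
rewrite leq_add2l -max_la; apply: (alpha_biglcm_leq_bigmax b) => a.
by case: (P a).
Qed.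

End FiniteIterates.

Theorem lemma3p1 (n : nat) (F : finType) (sigma : F -> F) :
  0 < n -> #|F| = n ->
  (* (i) *)
  (forall a : F, exists k l : nat,
     [/\ 1 <= l, iter k sigma a = iter (k + l) sigma a & k + l <= n]) /\
  (* (ii) *)
  (forall (a : F) (k1 l1 k2 l2 : nat), 1 <= l1 -> 1 <= l2 ->
     iter k1 sigma a = iter (k1 + l1) sigma a ->
     iter k2 sigma a = iter (k2 + l2) sigma a ->
     iter (minn k1 k2) sigma a = iter (minn k1 k2 + gcdn l1 l2) sigma a) /\
  (* (iii) *)
  (forall a : F, exists! kl : nat * nat,
     1 <= kl.2 /\
     forall k' l' : nat, 1 <= l' ->
       (iter k' sigma a = iter (k' + l') sigma a <-> kl.1 <= k' /\ kl.2 %| l')) /\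
  (* (iv) and (v), for the pairs (k_a, l_a) characterized in (iii) *)
  (forall ka la : F -> nat,
     (forall a : F, 1 <= la a /\
        forall k' l' : nat, 1 <= l' ->
          (iter k' sigma a = iter (k' + l') sigma a <-> ka a <= k' /\ la a %| l')) ->
     let K := \max_(a : F) ka a in
     let L := \big[lcmn/1]_(a : F) la a in
     (forall K' L' : nat, 1 <= L' ->
        ((forall x : F, iter K' sigma x = iter (K' + L') sigma x) <->
         K <= K' /\ L %| L')) /\
     K + alpha L <= n).
Proof.
move=> n_gt0 card_F; subst n.
split; first exact: eventually_periodic_within_card.
split; first by move=> a k1 l1 k2 l2; apply: eventually_periodic_minn_gcdn.
split.
  move=> a; have [k0 [l0 [l0_gt0 E0 _]]] := eventually_periodic_within_card sigma a.
  have [k [l Pkl]] := preperiod_period_exists l0_gt0 E0.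
  exists (k, l); split; first exact: Pkl.
  by move=> [k' l'] /(preperiod_period_uniq Pkl) [-> ->].
move=> ka la P K L; split; first exact: iter_eventually_periodic_max_lcm.
exact: bigmax_add_alpha_biglcm_leq_card P n_gt0.
Qed.
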